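(* Let $\phi$ be any random number generation algorithm for $Y^n$ from the coin process $\mathbf X$ that satisfies the validity condition, and let $T$ be its stopping time. Then for every integer $m\ge 0$ and all real numbers $\tau,\lambda\ge 0$, \[ \Pr(T>m)\ \ge\ P_{Y^n}(\mathcal T_n^c(\tau)) - P_{X^m}(\mathcal S_m(\lambda)) - 2^{-\tau+\lambda} \ =\ P_{X^m}(\mathcal S_m^c(\lambda)) - P_{Y^n}(\mathcal T_n(\tau)) - 2^{-\tau+\lambda}, \] where \[ \mathcal S_m(\lambda)=\Big\{x^m\in\mathcal X^m:\log\tfrac{1}{P_{X^m}(x^m)}\ge\lambda\Big\},\qquad \mathcal T_n(\tau)=\Big\{y^n\in\mathcal Y^n:\log\tfrac{1}{P_{Y^n}(y^n)}\le\tau\Big\}, \] and complements are taken in $\mathcal X^m$ and $\mathcal Y^n$ respectively.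
   Context: Logarithms are base 2. Let $\mathcal X=\{1,\dots,M\}$ and $\mathcal Y=\{1,\dots,N\}$ be finite sets. The coin process $\mathbf X=\{X^m=(X_1,\dots,X_m)\}_{m\ge1}$ is a sequence of random vectors with distributions $P_{X^m}$ on $\mathcal X^m$ that are consistent ($\sum_{x_{m+1}}P_{X^{m+1}}(x^m,x_{m+1})=P_{X^m}(x^m)$), i.e. the finite-dimensional marginals of one random sequence $X_1,X_2,\dots$ (arbitrary, not necessarily stationary or ergodic); the target process $\mathbf Y=\{Y^n\}_{n\ge1}$ on $\mathcal Y$ is defined likewise. A random number generation (RNG) algorithm for $Y^n$ is a map $\phi:\bigcup_{i\ge0}\mathcal X^i\to\{\bot\}\cup\mathcal Y^n$, where $\mathcal X^0=\{\bot\}$ consists of the empty sequence. Its set of leaves $\mathcal L_\phi$ is the set of finite sequences $s$ with $\phi(s)\in\mathcal Y^n$ and $\phi(s')=\bot$ for every proper prefix $s'$ of $s$; $|s|$ is the length of $s$. For $x^m\in\mathcal X^m$ one writes $\phi(x^m)=y^n$ if some prefix $x^i$ ($i\le m$) of $x^m$ is a leaf with $\phi(x^i)=y^n$, and $\phi(x^m)=\bot$ otherwise. The stopping time $T$ is the smallest integer $m\ge0$ with $\phi(X^m)\in\mathcal Y^n$ ($T=\infty$ if there is none). The algorithm satisfies the validity condition if $\sum_{s\in\mathcal L_\phi:\,\phi(s)=y^n}P_{X^{|s|}}(s)=P_{Y^n}(y^n)$ for every $y^n\in\mathcal Y^n$ (equivalently $\lim_{m\to\infty}\Pr(\phi(X^m)=y^n)=P_{Y^n}(y^n)$).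 *)

From Stdlib Require Import Reals.
From HB Require Import structures.
From mathcomp Require Import all_boot.
Set Implicit Arguments. Unset Strict Implicit. Unset Printing Implicit Defensive.

Lemma Rplus_assoc' : associative Rplus.
Proof. by move=> a b c; rewrite Rplus_assoc. Qed.
HB.instance Definition _ := Monoid.isComLaw.Build R R0 Rplus
  Rplus_assoc' Rplus_comm Rplus_0_l.

Local Open Scope R_scope.

Definition log2 (x : R) : R := ln x / ln 2.

(* A process on the finite alphabet 'I_K is given by the family of its
   finite-dimensional marginals, P s = P_{X^{|s|}}(s) for s : seq 'I_K. *)
Definition is_process (K : nat) (P : seq 'I_K -> R) : Prop :=
  P [::] = 1 /\
  (forall s, 0 <= P s) /\
  (forall m : nat, (0 < m)%N ->
     \big[Rplus/R0]_(s : m.-tuple 'I_K) P (tval s) = 1) /\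
  (forall (m : nat) (s : m.-tuple 'I_K), (0 < m)%N ->
     \big[Rplus/R0]_(a : 'I_K) P (rcons (tval s) a) = P (tval s)).

(* An RNG algorithm phi : (finite sequences over 'I_M) -> {bot} U 'I_N^n,
   with None standing for bot. *)
Definition rng_alg (M N n : nat) := seq 'I_M -> option (n.-tuple 'I_N).

Definition is_leaf (M N n : nat) (phi : rng_alg M N n) (s : seq 'I_M) : bool :=
  isSome (phi s) && all (fun i => ~~ isSome (phi (take i s))) (iota 0 (size s)).

(* Extended output phi(x^m): the output of the leaf that is a prefix of x^m
   (if any), else bot. *)
Definition phi_out (M N n : nat) (phi : rng_alg M N n) (x : seq 'I_M)
  : option (n.-tuple 'I_N) :=
  match [seq take i x | i <- iota 0 (size x).+1 & is_leaf phi (take i x)] with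
  | s :: _ => phi s
  | [::] => None
  end.

(* Validity condition: for all y^n, sum over leaves s with phi(s) = y^n of
   P_{X^{|s|}}(s) equals P_{Y^n}(y^n); the countable sum of nonnegative terms
   is taken grouped by leaf length. *)
Definition valid (M N n : nat) (PX : seq 'I_M -> R) (PY : seq 'I_N -> R)
  (phi : rng_alg M N n) : Prop :=
  forall y : n.-tuple 'I_N,
    infinite_sum
      (fun k => \big[Rplus/R0]_(s : k.-tuple 'I_M |
                   is_leaf phi (tval s) && (phi (tval s) == Some y)) PX (tval s))
      (PY (tval y)).

(* Pr(T > m) = Pr(phi(X^m) = bot) *)
Definition PrT_gt (M N n : nat) (PX : seq 'I_M -> R) (phi : rng_alg M N n)
  (m : nat) : R :=
  \big[Rplus/R0]_(x : m.-tuple 'I_M | phi_out phi (tval x) == None) PX (tval x).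

Definition prob (K m : nat) (P : seq 'I_K -> R) (A : pred (m.-tuple 'I_K)) : R :=
  \big[Rplus/R0]_(x : m.-tuple 'I_K | A x) P (tval x).

(* S_m(lambda) = { x^m : log (1/P(x^m)) >= lambda }, with log(1/0) = +infinity *)
Definition S_set (M m : nat) (PX : seq 'I_M -> R) (lam : R) : pred (m.-tuple 'I_M) :=
  fun x => if Req_EM_T (PX (tval x)) 0 then true
           else if Rle_dec lam (log2 (/ PX (tval x))) then true else false.

(* T_n(tau) = { y^n : log (1/P(y^n)) <= tau }, with log(1/0) = +infinity *)
Definition T_set (N n : nat) (PY : seq 'I_N -> R) (tau : R) : pred (n.-tuple 'I_N) :=
  fun y => if Req_EM_T (PY (tval y)) 0 then false
           else if Rle_dec (log2 (/ PY (tval y))) tau then true else false.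

From Stdlib Require Import Reals Lra.
From mathcomp Require Import all_boot.
Set Implicit Arguments. Unset Strict Implicit. Unset Printing Implicit Defensive.
Local Open Scope R_scope.

(* Write B = T_n^c(tau) and c = 2^(lambda - tau).  The proof has two halves.
   1. Pr(phi(X^K) = y) increases to P_{Y^n}(y) by validity, and an output
      produced by time m never changes, so for K >= m
        Pr(phi(X^K) in B) <= Pr(phi(X^m) in B) + Pr(T > m);
      letting K go to infinity gives P_{Y^n}(B) <= Pr(phi(X^m) in B) + Pr(T > m).
   2. Split {phi(X^m) in B} along S_m(lambda).  If some x outside S_m(lambda)
      has an output y in B, then 2^(-lambda) < P(x) <= P(y) < 2^(-tau), so
      c > 1; otherwise that part is empty.  Either way it has mass <= c, and
      Pr(phi(X^m) in B) <= P(S_m(lambda)) + c. *)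

Lemma sumR_le (I : Type) (r : seq I) (P : pred I) (F G : I -> R) :
  (forall i, P i -> F i <= G i) ->
  \big[Rplus/R0]_(i <- r | P i) F i <= \big[Rplus/R0]_(i <- r | P i) G i.
Proof. by move=> FG; apply: (big_ind2 (fun x y => x <= y)) => *; lra || auto. Qed.

Lemma sumR_ge0 (I : Type) (r : seq I) (P : pred I) (F : I -> R) :
  (forall i, P i -> 0 <= F i) -> 0 <= \big[Rplus/R0]_(i <- r | P i) F i.
Proof. by move=> F0; apply: (big_ind (fun x => 0 <= x)) => *; lra || auto. Qed.

Lemma sumR_mull (I : Type) (r : seq I) (P : pred I) (F : I -> R) c :
  \big[Rplus/R0]_(i <- r | P i) (c * F i) = c * \big[Rplus/R0]_(i <- r | P i) F i.
Proof.
elim: r => [|a r IH]; rewrite ?big_nil ?big_cons; first ring.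
by case: (P a); rewrite IH; ring.
Qed.

Lemma sumR_sub (I : Type) (r : seq I) (P Q : pred I) (F : I -> R) :
  (forall i, P i -> Q i) -> (forall i, Q i -> 0 <= F i) ->
  \big[Rplus/R0]_(i <- r | P i) F i <= \big[Rplus/R0]_(i <- r | Q i) F i.
Proof.
move=> PQ F0; rewrite big_mkcond [X in _ <= X]big_mkcond; apply: sumR_le => i _.
case Pi: (P i); first by rewrite (PQ i Pi); lra.
by case Qi: (Q i); [apply: F0 | lra].
Qed.

Lemma sum_tuple0 (T : finType) (F : 0.-tuple T -> R) :
  \big[Rplus/R0]_(z : 0.-tuple T) F z = F [tuple].
Proof. by apply: (big_pred1 [tuple]) => z; symmetry; apply/eqP; exact: tuple0. Qed.

Lemma sum_tuple_rcons (T : finType) K (F : K.+1.-tuple T -> R) :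
  \big[Rplus/R0]_(x : K.+1.-tuple T) F x =
  \big[Rplus/R0]_(z : K.-tuple T) \big[Rplus/R0]_(a : T) F [tuple of rcons z a].
Proof.
rewrite pair_big /=.
pose split_last (x : K.+1.-tuple T) :=
  let x0 := thead x in ([tuple of belast x0 (behead x)], last x0 (behead x)).
apply: (reindex (fun p : K.-tuple T * T => [tuple of rcons p.1 p.2])).
exists split_last => [[z a] _ | [[|x0 s] sz] _] //.
- rewrite /split_last /thead; case: z => [[|z0 z] sz] /=; apply/eqP.
    by rewrite xpair_eqE -val_eqE /=.
  by rewrite xpair_eqE -val_eqE /= belast_rcons last_rcons !eqxx.
- by apply: val_inj; rewrite /= -lastI.
Qed.

Lemma take_rcons_small (T : Type) i (x : seq T) a :
  (i <= size x)%N -> take i (rcons x a) = take i x.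
Proof. by move=> ix; rewrite -cats1 takel_cat. Qed.

Section Process.
Variables (A : nat) (P : seq 'I_A -> R).
Hypothesis procP : is_process P.

Lemma process_ge0 s : 0 <= P s.
Proof. by case: procP => _ []. Qed.

(* Consistency also holds at length 0, because P_{X^1} has total mass 1. *)
Lemma process_consistent K (s : K.-tuple 'I_A) :
  \big[Rplus/R0]_(a : 'I_A) P (rcons s a) = P s.
Proof.
case: procP => P0 [_ [mass1 cons]].
case: K s => [|K] s; last exact: cons.
rewrite (tuple0 s) /= P0 -(mass1 1%N) // sum_tuple_rcons sum_tuple0.
exact: eq_bigr.
Qed.

Lemma process_marginal (g : seq 'I_A -> R) m K : (m <= K)%N ->
  \big[Rplus/R0]_(x : K.-tuple 'I_A) (g (take m x) * P x) =
  \big[Rplus/R0]_(z : m.-tuple 'I_A) (g z * P z).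
Proof.
elim: K => [|K IH]; first by rewrite leqn0 => /eqP ->; rewrite !sum_tuple0.
rewrite leq_eqVlt => /orP[/eqP -> | mK].
  by apply: eq_bigr => x _; rewrite take_oversize // size_tuple.
rewrite -IH // sum_tuple_rcons; apply: eq_bigr => z _.
rewrite -[in RHS]process_consistent -sumR_mull; apply: eq_bigr => a _ /=.
by rewrite take_rcons_small // size_tuple.
Qed.

Lemma process_mass1 K : \big[Rplus/R0]_(x : K.-tuple 'I_A) P x = 1.
Proof.
have := process_marginal (fun _ => 1) (leq0n K); rewrite sum_tuple0.
case: procP => -> _; rewrite Rmult_1_l => <-.
by apply: eq_bigr => x _; rewrite Rmult_1_l.
Qed.

Lemma prob_compl K (E : pred (K.-tuple 'I_A)) : prob P E + prob P (predC E) = 1.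
Proof. by rewrite -(process_mass1 K) (bigID E). Qed.

End Process.

Section Output.
Variables (M N n : nat) (phi : rng_alg M N n).

Definition leaf_prefixes (x : seq 'I_M) : seq (seq 'I_M) :=
  [seq take i x | i <- iota 0 (size x).+1 & is_leaf phi (take i x)].

Lemma phi_outE x :
  phi_out phi x = if leaf_prefixes x is s :: _ then phi s else None.
Proof. by []. Qed.

Lemma leaf_prefixes_leaf x s : s \in leaf_prefixes x -> is_leaf phi s.
Proof. by case/mapP => i; rewrite mem_filter => /andP[leaf_i _] ->. Qed.

Lemma phi_out_None_leaf x : (phi_out phi x == None) = (leaf_prefixes x == [::]).
Proof.
rewrite phi_outE; case E: (leaf_prefixes x) => [|s r] //.
have := @leaf_prefixes_leaf x s; rewrite E mem_head => /(_ isT) /andP[].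
by case: (phi s).
Qed.

Lemma leaf_prefixes_rcons x a : leaf_prefixes (rcons x a) =
  leaf_prefixes x ++ (if is_leaf phi (rcons x a) then [:: rcons x a] else [::]).
Proof.
rewrite /leaf_prefixes size_rcons -addn1 iotaD filter_cat map_cat add0n.
congr (_ ++ _).
- have take_x i : i \in iota 0 (size x).+1 -> take i (rcons x a) = take i x.
    by rewrite mem_iota => /andP[_ ix]; rewrite take_rcons_small.
  rewrite (eq_in_filter (a2 := fun i => is_leaf phi (take i x))); last first.
    by move=> i /take_x ->.
  by apply/eq_in_map => i; rewrite mem_filter => /andP[_ /take_x].
- rewrite /= take_oversize ?size_rcons //.
  by case: (is_leaf _ _) => /=; rewrite ?take_oversize ?size_rcons.
Qed.

(* The output is bot iff phi answers bot on every prefix of x: a prefix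
   where phi first answers is a leaf. *)
Lemma phi_out_None x : (phi_out phi x == None) =
  all (fun i => ~~ isSome (phi (take i x))) (iota 0 (size x).+1).
Proof.
have -> : (phi_out phi x == None) = ~~ has (fun i => is_leaf phi (take i x))
                                         (iota 0 (size x).+1).
  by rewrite phi_out_None_leaf has_filter negbK /leaf_prefixes -size_eq0 size_map size_eq0.
rewrite all_predC; congr (~~ _); apply/hasP/hasP => [[i iota_i] /andP[] | [j iota_j]].
  by exists i.
rewrite mem_iota add0n ltnS in iota_j => some_j.
have exP : exists i, (i <= size x)%N && isSome (phi (take i x)).
  by exists j; rewrite some_j andbT; case/andP: iota_j.
case: (ex_minnP exP) => i /andP[ix some_i] min_i.
exists i; first by rewrite mem_iota add0n ltnS.
rewrite /is_leaf some_i size_takel //; apply/allP => k; rewrite mem_iota add0n => /andP[_ ki].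
rewrite take_takel ?(ltnW ki) //; apply/negP => some_k.
have := min_i k; rewrite (leq_trans (ltnW ki) ix) some_k => /(_ isT).
by rewrite leqNgt ki.
Qed.

Lemma leaf_rcons x a :
  is_leaf phi (rcons x a) = isSome (phi (rcons x a)) && (phi_out phi x == None).
Proof.
rewrite phi_out_None /is_leaf size_rcons; congr (_ && _).
by apply: eq_in_all => i; rewrite mem_iota => /andP[_ ix]; rewrite take_rcons_small.
Qed.

Lemma phi_out_nil : phi_out phi [::] = phi [::].
Proof.
by rewrite phi_outE /leaf_prefixes /is_leaf /=; case E: (phi [::]) => /=; rewrite ?E.
Qed.

Lemma phi_out_rcons x a : phi_out phi (rcons x a) =
  if phi_out phi x is Some y then Some y else phi (rcons x a).
Proof.
rewrite [in LHS]phi_outE leaf_prefixes_rcons leaf_rcons phi_out_None_leaf.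
rewrite [in RHS]phi_outE; case E: (leaf_prefixes x) => [|s r] /=.
  by case Ea: (phi (rcons x a)) => /=; rewrite ?Ea.
have := @leaf_prefixes_leaf x s; rewrite E mem_head => /(_ isT) /andP[].
by case: (phi s).
Qed.

Lemma phi_out_take x k y :
  phi_out phi (take k x) = Some y -> phi_out phi x = Some y.
Proof.
elim/last_ind: x => [|x a IH] //.
case: (leqP k (size x)) => [kx | xk]; last by rewrite take_oversize // size_rcons.
by rewrite take_rcons_small // phi_out_rcons => /IH ->.
Qed.

End Output.

Definition some_in (Y : Type) (B : pred Y) : pred (option Y) :=
  fun o => if o is Some y then B y else false.

Lemma sum_fibers (X Y : finType) (g : X -> option Y) (B : pred Y) (f : X -> R) :
  \big[Rplus/R0]_(y | B y) \big[Rplus/R0]_(x | g x == Some y) f x =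
  \big[Rplus/R0]_(x | some_in B (g x)) f x.
Proof.
rewrite big_mkcond [RHS]big_mkcond.
rewrite (eq_bigr (fun y => \big[Rplus/R0]_x (if B y && (g x == Some y) then f x else 0)));
  last by move=> y _; case: (B y); [rewrite big_mkcond | rewrite big1].
rewrite exchange_big; apply: eq_bigr => x _.
case: (g x) => [y0|] /=; last by rewrite big1 // => y _; rewrite andbF.
rewrite (bigD1 y0) //= eqxx andbT big1; first by case: (B y0); ring.
by move=> y y_y0; rewrite (inj_eq Some_inj) eq_sym (negbTE y_y0) andbF.
Qed.

Lemma cv_sum (Y : Type) (r : seq Y) (P : pred Y) (u : Y -> nat -> R) (l : Y -> R) :
  (forall y, Un_cv (u y) (l y)) ->
  Un_cv (fun K => \big[Rplus/R0]_(y <- r | P y) u y K)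
        (\big[Rplus/R0]_(y <- r | P y) l y).
Proof.
move=> cv_u; elim: r => [|a r IH].
  move=> eps eps_gt0; exists 0%nat => k _.
  by rewrite !big_nil /R_dist Rminus_diag Rabs_R0.
rewrite big_cons; case Pa: (P a).
  by apply: Un_cv_ext (CV_plus _ _ _ _ (cv_u a) IH) => k; rewrite big_cons Pa.
by apply: Un_cv_ext IH => k; rewrite big_cons Pa.
Qed.

Lemma cv_le_eventually (u : nat -> R) l c m :
  Un_cv u l -> (forall K, (m <= K)%N -> u K <= c) -> l <= c.
Proof.
move=> cv_u u_le; apply: (@Rle_cv_lim (fun K => u (Nat.add K m)) (fun _ => c) l c).
- by move=> K; apply: u_le; exact: leq_addl.
- exact: CV_shift'.
- move=> eps eps_gt0; exists 0%nat => k _.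
  by rewrite /R_dist Rminus_diag Rabs_R0.
Qed.

(* Base-2 logarithms: p = 2^(-log2 (1/p)), so comparing log2 (1/p) with a
   threshold t is comparing p with 2^(-t). *)
Lemma Rpower2_log2_inv p : 0 < p -> Rpower 2 (- log2 (/ p)) = p.
Proof.
move=> p_gt0; have inv_gt0 := Rinv_0_lt_compat p p_gt0.
by rewrite Rpower_Ropp (Rpower_Rlog 2 (/ p)) ?Rinv_inv //; lra.
Qed.

Lemma log2_inv_lt p t : 0 < p -> log2 (/ p) < t -> Rpower 2 (- t) < p.
Proof.
move=> p_gt0 lt_t; rewrite -[X in _ < X](Rpower2_log2_inv p_gt0).
by apply: Rpower_lt; lra.
Qed.

Lemma log2_inv_gt p t : 0 < p -> t < log2 (/ p) -> p < Rpower 2 (- t).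
Proof.
move=> p_gt0 gt_t; rewrite -[X in X < _](Rpower2_log2_inv p_gt0).
by apply: Rpower_lt; lra.
Qed.

Lemma Rpower2_lt_inv a b : Rpower 2 a < Rpower 2 b -> a < b.
Proof.
move=> lt_ab; apply: Rnot_le_lt => le_ba.
by have := Rle_Rpower 2 b a ltac:(lra) le_ba; lra.
Qed.

Lemma not_S_set_lower M m (PX : seq 'I_M -> R) lam (x : m.-tuple 'I_M) :
  0 <= PX x -> ~~ S_set PX lam x -> Rpower 2 (- lam) < PX x.
Proof.
rewrite /S_set; case: Req_EM_T => // PX_neq0; case: Rle_dec => // not_le PX_ge0 _.
by apply: log2_inv_lt; [lra | apply: Rnot_le_lt].
Qed.

Lemma not_T_set_upper N n (PY : seq 'I_N -> R) tau (y : n.-tuple 'I_N) :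
  0 <= PY y -> ~~ T_set PY tau y -> PY y < Rpower 2 (- tau).
Proof.
rewrite /T_set; case: Req_EM_T => [PY_eq0 _ _ | PY_neq0].
  by rewrite PY_eq0; exact: exp_pos.
case: Rle_dec => // not_le PY_ge0 _.
by apply: log2_inv_gt; [lra | apply: Rnot_le_lt].
Qed.

Section Converse.
Variables (M N n : nat) (PX : seq 'I_M -> R) (PY : seq 'I_N -> R).
Variable phi : rng_alg M N n.
Hypotheses (procX : is_process PX) (validXY : valid PX PY phi).

Definition out_prob K (E : pred (option (n.-tuple 'I_N))) : R :=
  \big[Rplus/R0]_(x : K.-tuple 'I_M | E (phi_out phi x)) PX x.

Definition leaf_mass (y : n.-tuple 'I_N) k : R :=
  \big[Rplus/R0]_(s : k.-tuple 'I_M | is_leaf phi s && (phi s == Some y)) PX s.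

(* Its partial sums are Pr(phi(X^K) = y): a sequence of length K+1 outputs y
   iff its first K letters do, or they output bot and it is a leaf for y. *)
Lemma leaf_mass_partial y K :
  sum_f_R0 (leaf_mass y) K = out_prob K (pred1 (Some y)).
Proof.
elim: K => [|K IH].
  rewrite /= /leaf_mass /out_prob big_mkcond [RHS]big_mkcond !sum_tuple0 /=.
  by rewrite phi_out_nil /is_leaf /=; case: (phi [::]).
rewrite /= IH /leaf_mass /out_prob big_mkcond [X in _ + X]big_mkcond [RHS]big_mkcond.
rewrite !sum_tuple_rcons -big_split; apply: eq_bigr => z _ /=.
have -> : (if phi_out phi z == Some y then PX z else 0) =
    \big[Rplus/R0]_(a : 'I_M) (if phi_out phi z == Some y then PX (rcons z a) else 0).
  by case: eqP => _; [rewrite (process_consistent procX) | rewrite big1].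
rewrite -big_split; apply: eq_bigr => a _ /=.
rewrite phi_out_rcons leaf_rcons.
case: (phi_out phi z) => [y'|]; case: (phi (rcons z a)) => [y''|] /=;
  try case: (_ == _); lra.
Qed.

Lemma leaf_mass_ge0 y k : 0 <= leaf_mass y k.
Proof. by apply: sumR_ge0 => s _; apply: process_ge0. Qed.

Lemma out_prob_cv y : Un_cv (fun K => out_prob K (pred1 (Some y))) (PY y).
Proof. exact: (Un_cv_ext _ _ (leaf_mass_partial y) _ (validXY y)). Qed.

Lemma out_prob_le_PY y K : out_prob K (pred1 (Some y)) <= PY y.
Proof.
by rewrite -leaf_mass_partial; apply: sum_incr (validXY y) (leaf_mass_ge0 y).
Qed.

Lemma out_prob_later B m K : (m <= K)%N ->
  out_prob K (some_in B) <= out_prob m (some_in B) + out_prob m (pred1 None).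
Proof.
move=> mK; pose ind (b : bool) : R := if b then 1 else 0.
pose g (z : seq 'I_M) := ind (some_in B (phi_out phi z)) + ind (phi_out phi z == None).
have ind_ge0 b : 0 <= ind b by rewrite /ind; case: b; lra.
apply: (Rle_trans _ (\big[Rplus/R0]_(x : K.-tuple 'I_M) (g (take m x) * PX x))).
  rewrite /out_prob big_mkcond; apply: sumR_le => x _.
  have := process_ge0 procX x; have := ind_ge0 (some_in B (phi_out phi (take m x))).
  rewrite /g; case E: (phi_out phi (take m x)) => [y|] /=.
    by rewrite (phi_out_take E) /ind /=; case: (B y) => /=; lra.
  by rewrite /ind /=; case: (some_in _ _); lra.
rewrite (process_marginal procX g mK) /out_prob.
rewrite [X in _ <= X + _]big_mkcond [X in _ <= _ + X]big_mkcond -big_split.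
apply: Req_le; apply: eq_bigr => z _; rewrite /g /ind /=.
by case: (some_in _ _); case: (_ == None) => /=; ring.
Qed.

Lemma PY_le_out_prob (B : pred (n.-tuple 'I_N)) m :
  \big[Rplus/R0]_(y : n.-tuple 'I_N | B y) PY y <=
  out_prob m (some_in B) + out_prob m (pred1 None).
Proof.
apply: (@cv_le_eventually _ _ _ m (cv_sum (index_enum _) B out_prob_cv)) => K mK.
rewrite (eq_bigr (fun y =>
  \big[Rplus/R0]_(x : K.-tuple 'I_M | phi_out phi x == Some y) PX x)) //.
rewrite (sum_fibers (fun x : K.-tuple 'I_M => phi_out phi x)).
exact: out_prob_later.
Qed.

Definition atypical_output tau lam m (x : m.-tuple 'I_M) : bool :=
  some_in (predC (T_set PY tau)) (phi_out phi x) && ~~ S_set PX lam x.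

Lemma atypical_output_prob tau lam m :
  \big[Rplus/R0]_(x : m.-tuple 'I_M | atypical_output tau lam x) PX x
    <= Rpower 2 (- tau + lam).
Proof.
have bound_gt0 : 0 < Rpower 2 (- tau + lam) by apply: exp_pos.
case: (pickP (@atypical_output tau lam m)) => [x0 /andP[out_x0 typical_x0] | none].
  2: by rewrite big_pred0 //; lra.
case E: (phi_out phi x0) out_x0 => [y|] //= y_notT.
have x0_le_y : PX x0 <= PY y.
  apply: Rle_trans (out_prob_le_PY y m); rewrite /out_prob (bigD1 x0) ?E //=.
  rewrite -[X in X <= _]Rplus_0_r; apply: Rplus_le_compat_l.
  by apply: sumR_ge0 => x _; exact: process_ge0.
have x0_lower := not_S_set_lower (process_ge0 procX x0) typical_x0.
have y_upper := not_T_set_upper (Rle_trans _ _ _ (process_ge0 procX x0) x0_le_y) y_notT.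
have bound_gt1 : 1 < Rpower 2 (- tau + lam).
  rewrite -(Rpower_O 2); last lra.
  apply: Rpower_lt; first lra.
  have := Rlt_trans _ _ _ (Rlt_le_trans _ _ _ x0_lower x0_le_y) y_upper.
  by move=> /Rpower2_lt_inv; lra.
apply: Rle_trans (Rlt_le _ _ bound_gt1).
rewrite -(process_mass1 procX m); apply: sumR_sub => // x _.
exact: process_ge0.
Qed.

Lemma out_prob_notT_le tau lam m :
  out_prob m (some_in (predC (T_set PY tau))) <=
  prob PX (@S_set M m PX lam) + Rpower 2 (- tau + lam).
Proof.
rewrite /out_prob (bigID (S_set PX lam)) /=.
apply: Rplus_le_compat; last exact: atypical_output_prob.
by apply: sumR_sub => [x /andP[] | x _] //; exact: process_ge0.
Qed.

End Converse.

Unset Implicit Arguments.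

Theorem theorem1 (M N n : nat) (PX : seq 'I_M -> R) (PY : seq 'I_N -> R)
  (phi : rng_alg M N n) :
  is_process PX -> is_process PY -> valid PX PY phi ->
  forall (m : nat) (tau lam : R), 0 <= tau -> 0 <= lam ->
    PrT_gt PX phi m >=
      prob PY (predC (@T_set N n PY tau)) - prob PX (@S_set M m PX lam)
        - Rpower 2 (- tau + lam)
    /\
    prob PY (predC (@T_set N n PY tau)) - prob PX (@S_set M m PX lam)
        - Rpower 2 (- tau + lam)
    = prob PX (predC (@S_set M m PX lam)) - prob PY (@T_set N n PY tau)
        - Rpower 2 (- tau + lam).
Proof.
move=> procX procY validXY m tau lam _ _.
have massY := prob_compl procY (@T_set N n PY tau).
have massX := prob_compl procX (@S_set M m PX lam).
split; last by lra.
have first_half : prob PY (predC (@T_set N n PY tau)) <=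
    out_prob PX phi m (some_in (predC (@T_set N n PY tau))) + PrT_gt PX phi m :=
  PY_le_out_prob procX validXY _ m.
have := out_prob_notT_le procX validXY tau lam m.
lra.
Qed.
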